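(* Let $n,c,s,p$ and $n_1,\dots,n_c$ be positive integers with $n_1\ge 2p$, $n_1\ge n_2\ge\cdots\ge n_c\ge p$ and $n_1+n_2+\cdots+n_c=n-s$. Then $$\lambda_1\big(D(K_s\vee(K_{n_1}+K_{n_2}+\cdots+K_{n_c}))\big)\ge \lambda_1\big(D(K_s\vee(K_{n-s-p(c-1)}+(c-1)K_p))\big),$$ with equality if and only if $(n_1,n_2,\dots,n_c)=(n-s-p(c-1),p,\dots,p)$.
   Context: For a connected graph $G$, $D(G)$ is the distance matrix and $\lambda_1(D(G))$ its largest eigenvalue (distance spectral radius). $K_m$ is the complete graph on $m$ vertices, $+$ denotes disjoint union, $(c-1)K_p$ is $c-1$ disjoint copies of $K_p$, and $G_1\vee G_2$ is the join of $G_1$ and $G_2$ (disjoint union plus all edges between them). *)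

From HB Require Import structures.
From mathcomp Require Import all_boot all_order all_algebra.
From mathcomp Require Import boolp classical_sets reals.
Set Implicit Arguments. Unset Strict Implicit. Unset Printing Implicit Defensive.
Import Order.TTheory GRing.Theory Num.Theory.

Fixpoint within (T : finType) (adj : rel T) (k : nat) (x y : T) : bool :=
  match k with
  | 0 => x == y
  | k'.+1 => (x == y) || [exists z, adj x z && within adj k' z y]
  end.

(* Graph distance: least k with y reachable from x within k steps
   (for a connected graph on #|T| vertices this is attained below #|T|). *)
Definition gdist (T : finType) (adj : rel T) (x y : T) : nat :=
  find (fun k => within adj k x y) (iota 0 #|T|).

Definition dist_matrix (R : pzRingType) (T : finType) (adj : rel T) : 'M[R]_#|T| :=
  \matrix_(i, j) ((gdist adj (enum_val i) (enum_val j))%:R)%R.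

(* Largest eigenvalue lambda_1 of a square real matrix (chosen by
   classical choice among the largest eigenvalues; 0 if none exists). *)
Definition lambda1 (R : realType) (N : nat) (A : 'M[R]_N) : R :=
  xget 0%R [set l : R | eigenvalue A l /\ (forall m : R, eigenvalue A m -> m <= l)%R].

(* Vertex type of K_s \/ (K_{ns 0} + ... + K_{ns (c-1)}):
   inl i : vertex of K_s ;  inr (existT i j) : j-th vertex of the i-th clique. *)
Definition jvert (s c : nat) (ns : nat -> nat) : finType :=
  ('I_s + {i : 'I_c & 'I_(ns i)})%type.

Definition jadj (s c : nat) (ns : nat -> nat) : rel (jvert s c ns) :=
  fun u v => (u != v) &&
    match u, v with
    | inl _, _ => true
    | _, inl _ => true
    | inr (existT i _), inr (existT i' _) => i == i'
    end.

Definition Djoin (R : pzRingType) (s c : nat) (ns : nat -> nat) :=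
  @dist_matrix R (jvert s c ns) (@jadj s c ns).

(* Distances in K_s \/ (K_{n_1} + ... + K_{n_c}) are 0, 1 or 2, so an eigenvector
   of the distance matrix is determined by its sums over K_s and over each clique.
   Eliminating these sums shows that mu = lambda + 1 > s for an eigenvalue lambda
   satisfies the secular equation mu - s = (2 mu - s) h(mu) with
   h(mu) = sum_i n_i / (mu + n_i); conversely a root mu > s gives an explicit
   eigenvector. As h is decreasing the root is unique, lambda_1 = mu - 1, and
   lambda_1 grows with h. Finally t |-> t / (mu + t) is concave, so replacing two
   clique sizes a, b >= p by a + b - p and p lowers h, strictly when a, b > p;
   pushing every clique but the first down to size p minimises h. *)

From HB Require Import structures.
From mathcomp Require Import all_boot all_order all_algebra.
From mathcomp Require Import boolp classical_sets reals.
From mathcomp Require Import ring lra zify.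
Import Order.TTheory GRing.Theory Num.Theory.
Set Implicit Arguments. Unset Strict Implicit. Unset Printing Implicit Defensive.

Lemma within1 (T : finType) (adj : rel T) x y :
  within adj 1 x y = (x == y) || adj x y.
Proof.
congr (_ || _); apply/existsP/idP => [[z /andP[xz /eqP <-]] //|xy].
by exists y; rewrite xy eqxx.
Qed.

Section JoinGraph.
Variables (s c : nat) (ns : nat -> nat).
Local Notation V := (jvert s c ns).

Definition block (x : V) : option 'I_c :=
  if x is inr u then Some (tag u) else None.

Definition jnear (x y : V) : bool :=
  [|| block x == None, block y == None | block x == block y].

Definition jdist (x y : V) : nat :=
  if x == y then 0 else if jnear x y then 1 else 2.

Lemma jadjE x y : jadj x y = (x != y) && jnear x y.
Proof. by case: x => [a|[i a]]; case: y => [b|[j b]]. Qed.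

Lemma jnearC x y : jnear x y = jnear y x.
Proof. by rewrite /jnear; case: (block x) => [a|]; case: (block y) => [b|] //=; rewrite eq_sym. Qed.

Lemma jnearxx x : jnear x x.
Proof. by rewrite /jnear eqxx !orbT. Qed.

Lemma gdist_jadj : (0 < s)%N -> forall x y, gdist (@jadj s c ns) x y = jdist x y.
Proof.
move=> s_gt0 x y; pose z : V := inl (Ordinal s_gt0).
have card_ge (l : seq V) : uniq l -> (size l <= #|V|)%N.
  by move/card_uniqP <-; apply: max_card.
rewrite /gdist /jdist; case: eqP => [<-|/eqP nxy].
  have : (0 < #|V|)%N by apply/card_gt0P; exists x.
  by case: #|_| => //= k _; rewrite eqxx.
case: ifP => near_xy.
  have : (2 <= #|V|)%N by apply: (card_ge [:: x; y]); rewrite /= inE nxy.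
  case: #|_| => [|[|k]] //= _; rewrite (negbTE nxy) /=.
  suff -> : [exists w, jadj x w && (w == y)] by [].
  by apply/existsP; exists y; rewrite eqxx andbT jadjE nxy near_xy.
have : (3 <= #|V|)%N.
  apply: (card_ge [:: x; y; z]).
  by move: nxy near_xy; case: x => [a|[i a]]; case: y => [b|[j b]] //=; rewrite !inE negb_or => ->.
case: #|_| => [|[|[|k]]] //= _; rewrite (negbTE nxy) /=.
have -> : [exists w, jadj x w && (w == y)] = false.
  by apply/existsP => -[w /andP[+ /eqP wy]]; rewrite wy jadjE near_xy andbF.
have -> // : [exists w, jadj x w && within (@jadj s c ns) 1 w y].
apply/existsP; exists z.
by move: nxy near_xy; case: x => [a|[i a]]; case: y => [b|[j b]]; rewrite within1.
Qed.

Lemma card_block_None : #|[pred x : V | block x == None]| = s.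
Proof.
have inj : injective (fun a : 'I_s => (inl a : V)) by move=> a b [].
rewrite -[RHS]card_ord -cardsT -(card_imset _ inj).
apply: eq_card => -[a|[j b]]; rewrite !inE /=; first by rewrite imset_f.
by apply/esym/imsetP => -[].
Qed.

Lemma card_block_Some i : #|[pred x : V | block x == Some i]| = ns i.
Proof.
pose g (a : 'I_(ns i)) : V := inr (Tagged (fun i : 'I_c => 'I_(ns i)) a).
have inj : injective g.
  move=> a b /(congr1 (fun z : V => if z is inr u then u else Tagged _ a)).
  exact: eq_from_Tagged.
rewrite -[RHS]card_ord -cardsT -(card_imset _ inj).
apply: eq_card => -[a|[j b]]; rewrite !inE /=; first by apply/esym/imsetP => -[].
case: (eqVneq j i) => [ji|nji].
  by subst j; rewrite eqxx; apply/esym/imsetP; exists b.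
rewrite (inj_eq (@Some_inj _)) (negbTE nji).
by apply/esym/imsetP => -[a' _ /(congr1 block) [] /eqP]; rewrite (negbTE nji).
Qed.

End JoinGraph.

Local Open Scope ring_scope.

Section FracShift.
Variable R : realFieldType.
Implicit Types (mu p t a b : R) (f : nat -> R).

Definition frac_shift mu t := t / (mu + t).

Definition secular c f mu := \sum_(i < c) frac_shift mu (f i).

Lemma frac_shift_spreadE mu p a b :
  0 < mu -> 0 < p -> p <= a -> p <= b ->
  frac_shift mu a + frac_shift mu b - frac_shift mu (a + b - p) - frac_shift mu p =
  mu * (a - p) * (b - p) * (2 * (mu + p) + (a - p) + (b - p)) /
  ((mu + p) * (mu + a) * (mu + b) * (mu + (a + b - p))).
Proof.
move=> mu_gt0 p_gt0 pa pb; rewrite /frac_shift.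
have n1 : mu + a != 0 by rewrite gt_eqF //; lra.
have n2 : mu + b != 0 by rewrite gt_eqF //; lra.
have n3 : mu + p != 0 by rewrite gt_eqF //; lra.
have n4 : mu + (a + b - p) != 0 by rewrite gt_eqF //; lra.
by field; rewrite n1 n2 n3 n4.
Qed.

Lemma frac_shift_spread_le mu p a b :
  0 < mu -> 0 < p -> p <= a -> p <= b ->
  frac_shift mu (a + b - p) + frac_shift mu p <= frac_shift mu a + frac_shift mu b.
Proof.
move=> mu_gt0 p_gt0 pa pb; rewrite -subr_ge0 opprD addrA frac_shift_spreadE //.
by apply: divr_ge0; [rewrite !mulr_ge0 //; lra | rewrite ltW // !mulr_gt0 //; lra].
Qed.

Lemma frac_shift_spread_lt mu p a b :
  0 < mu -> 0 < p -> p < a -> p < b ->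
  frac_shift mu (a + b - p) + frac_shift mu p < frac_shift mu a + frac_shift mu b.
Proof.
move=> mu_gt0 p_gt0 pa pb; rewrite -subr_gt0 opprD addrA frac_shift_spreadE ?ltW //.
by apply: divr_gt0; rewrite !mulr_gt0 //; lra.
Qed.

Lemma ler_sum_head p c f : (forall i, (i <= c)%N -> p <= f i) ->
  f 0%N + c%:R * p <= \sum_(i < c.+1) f i.
Proof.
move=> f_ge; rewrite big_ord_recl lerD2l mulr_natl -[X in p *+ X]card_ord -sumr_const.
by apply: ler_sum => i _; apply: f_ge; rewrite /= ltn_ord.
Qed.

Lemma secular_extremal_le mu p c f :
  0 < mu -> 0 < p -> (forall i, (i <= c)%N -> p <= f i) ->
  frac_shift mu (\sum_(i < c.+1) f i - c%:R * p) + c%:R * frac_shift mu p <=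
  secular c.+1 f mu.
Proof.
move=> mu_gt0 p_gt0; elim: c => [|c IH] f_ge.
  by rewrite /secular !big_ord1 !mul0r subr0 addr0.
have f_ge' i : (i <= c)%N -> p <= f i by move=> ic; apply: f_ge (leqW ic).
rewrite /secular [\sum_(i < c.+2) f i]big_ord_recr [\sum_(i < c.+2) frac_shift _ _]big_ord_recr /=.
set A := \sum_(i < c.+1) f i - c%:R * p.
have -> : \sum_(i < c.+1) f i + f c.+1 - c.+1%:R * p = A + f c.+1 - p.
  by rewrite /A -natr1; ring.
have A_ge : p <= A by have := ler_sum_head f_ge'; have := f_ge 0%N isT; rewrite /A; lra.
have := frac_shift_spread_le mu_gt0 p_gt0 A_ge (f_ge c.+1 (leqnn _)).
have := IH f_ge'; rewrite -natr1 /secular; lra.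
Qed.

Lemma secular_extremal_lt mu p c f :
  0 < mu -> 0 < p -> (forall i, (i <= c)%N -> p <= f i) -> p < f 0%N ->
  (exists2 j, (0 < j <= c)%N & p < f j) ->
  frac_shift mu (\sum_(i < c.+1) f i - c%:R * p) + c%:R * frac_shift mu p <
  secular c.+1 f mu.
Proof.
move=> mu_gt0 p_gt0; elim: c => [|c IH] f_ge f0_gt [j /andP[j_gt0 jc] fj_gt].
  by case: j j_gt0 jc {fj_gt}.
have f_ge' i : (i <= c)%N -> p <= f i by move=> ic; apply: f_ge (leqW ic).
have le_c := secular_extremal_le mu_gt0 p_gt0 f_ge'.
rewrite /secular [\sum_(i < c.+2) f i]big_ord_recr [\sum_(i < c.+2) frac_shift _ _]big_ord_recr /=.
rewrite /secular in le_c.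
set A := \sum_(i < c.+1) f i - c%:R * p in le_c *.
have -> : \sum_(i < c.+1) f i + f c.+1 - c.+1%:R * p = A + f c.+1 - p.
  by rewrite /A -natr1; ring.
have A_gt : p < A by have := ler_sum_head f_ge'; rewrite /A; lra.
have fc1_ge := f_ge c.+1 (leqnn _).
rewrite -natr1; case: (ltnP j c.+1) => [jc1|jc1].
  have := IH f_ge' f0_gt (ex_intro2 _ _ j _ fj_gt); rewrite j_gt0 -ltnS jc1 /secular.
  by have := frac_shift_spread_le mu_gt0 p_gt0 (ltW A_gt) fc1_ge; lra.
have ej : j = c.+1 by apply/eqP; rewrite eqn_leq jc jc1.
rewrite ej in fj_gt.
by have := frac_shift_spread_lt mu_gt0 p_gt0 A_gt fj_gt; lra.
Qed.

End FracShift.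

Definition extremal_blocks (c p : nat) (ns : nat -> nat) (i : nat) : nat :=
  if i == 0%N then (\sum_(j < c.+1) ns j - p * c)%N else p.

Section ExtremalBlocks.
Variables (c p : nat) (ns : nat -> nat).
Hypotheses (p_gt0 : (0 < p)%N) (ns_ge : forall i, (i <= c)%N -> (p <= ns i)%N).
Local Notation ns' := (extremal_blocks c p ns).

Lemma sum_blocks_ge : (ns 0 + c * p <= \sum_(i < c.+1) ns i)%N.
Proof.
rewrite big_ord_recl leq_add2l -[X in (X * p)%N]card_ord -sum_nat_const.
by apply: leq_sum => i _; apply/ns_ge/ltn_ord.
Qed.

Lemma extremal_blocks_gt0 i : (0 < ns' i)%N.
Proof.
have := sum_blocks_ge; have := ns_ge (leq0n c).
by rewrite /extremal_blocks; case: eqP => // _; lia.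
Qed.

Lemma extremal_blocksE : (forall j, (0 < j <= c)%N -> (ns j <= p)%N) ->
  forall i, (i <= c)%N -> ns i = ns' i.
Proof.
move=> ns_le i ic; have ns_tail j : (0 < j <= c)%N -> ns j = p.
  by move=> /[dup] /ns_le le_p /andP[_ /ns_ge ge_p]; apply/eqP; rewrite eqn_leq le_p ge_p.
rewrite /extremal_blocks; case: eqP => [->|/eqP i_neq0]; last by rewrite ns_tail ?lt0n ?i_neq0.
rewrite big_ord_recl (eq_bigr (fun=> p)) => [|j _]; last by rewrite ns_tail //= ltn_ord.
by rewrite sum_nat_const card_ord mulnC addnK.
Qed.

Variable R : realFieldType.

Lemma secular_extremal_blocksE mu :
  secular c.+1 (fun i => (ns' i)%:R : R) mu =
  frac_shift mu (\sum_(i < c.+1) (ns i)%:R - c%:R * p%:R) + c%:R * frac_shift mu p%:R.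
Proof.
rewrite /secular big_ord_recl /extremal_blocks /= sumr_const card_ord natrB.
  by rewrite natrM natr_sum [p%:R * _]mulrC !mulr_natl.
by rewrite mulnC (leq_trans (leq_addl _ _) sum_blocks_ge).
Qed.

Let p_gt0R : 0 < p%:R :> R. Proof. by rewrite ltr0n. Qed.
Let ns_geR i : (i <= c)%N -> p%:R <= (ns i)%:R :> R. Proof. by move/ns_ge; rewrite ler_nat. Qed.

Lemma secular_extremal_blocks_le mu : 0 < mu ->
  secular c.+1 (fun i => (ns' i)%:R : R) mu <= secular c.+1 (fun i => (ns i)%:R) mu.
Proof. by move=> mu_gt0; rewrite secular_extremal_blocksE secular_extremal_le. Qed.

Lemma secular_extremal_blocks_lt mu : 0 < mu -> (p < ns 0)%N ->
  (exists2 j, (0 < j <= c)%N & (p < ns j)%N) ->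
  secular c.+1 (fun i => (ns' i)%:R : R) mu < secular c.+1 (fun i => (ns i)%:R) mu.
Proof.
move=> mu_gt0 p_lt [j j_range p_lt_j].
by rewrite secular_extremal_blocksE secular_extremal_lt ?ltr_nat //; exists j; rewrite ?ltr_nat.
Qed.

End ExtremalBlocks.

Section SecularEquation.
Variable R : realFieldType.
Implicit Types (s m mu : R) (h : R -> R).

Definition secular_sol s h m := s < m /\ m - s = (2 * m - s) * h m.

Definition antitone_above s h := forall x y, s < x -> x <= y -> h y <= h x.

Lemma secular_sol_le s h1 h2 m1 m2 :
  0 < s -> secular_sol s h1 m1 -> secular_sol s h2 m2 -> antitone_above s h2 ->
  h1 m1 <= h2 m1 -> m1 <= m2.
Proof.
move=> s_gt0 [sm1 e1] [sm2 e2] h2_anti h12; rewrite leNgt; apply/negP => m21.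
have h22 := h2_anti _ _ sm2 (ltW m21).
have : (m1 - s) * (2 * m2 - s) <= (2 * m1 - s) * (m2 - s).
  have -> : (2 * m1 - s) * (m2 - s) = (2 * m1 - s) * h2 m2 * (2 * m2 - s) by rewrite e2; ring.
  rewrite ler_wpM2r //; first lra.
  by rewrite e1 ler_wpM2l ?(le_trans h12) //; lra.
have : s * m2 < s * m1 by rewrite ltr_pM2l.
nra.
Qed.

Lemma secular_sol_lt s h1 h2 m1 m2 :
  0 < s -> secular_sol s h1 m1 -> secular_sol s h2 m2 -> antitone_above s h2 ->
  h1 m1 < h2 m1 -> m1 < m2.
Proof.
move=> s_gt0 [sm1 e1] [sm2 e2] h2_anti h12; rewrite ltNge; apply/negP => m21.
have h22 := h2_anti _ _ sm2 m21.
have : (m1 - s) * (2 * m2 - s) < (2 * m1 - s) * (m2 - s).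
  have -> : (2 * m1 - s) * (m2 - s) = (2 * m1 - s) * h2 m2 * (2 * m2 - s) by rewrite e2; ring.
  rewrite ltr_pM2r; last lra.
  by rewrite e1 ltr_pM2l ?(lt_le_trans h12) //; lra.
have : s * m2 <= s * m1 by rewrite ler_pM2l.
nra.
Qed.

Lemma secular_sol_unique s h m1 m2 :
  0 < s -> secular_sol s h m1 -> secular_sol s h m2 -> antitone_above s h -> m1 = m2.
Proof.
move=> s_gt0 sol1 sol2 h_anti; apply/le_anti.
by rewrite (secular_sol_le s_gt0 sol1 sol2) ?(secular_sol_le s_gt0 sol2 sol1).
Qed.

Section Secular.
Variables (c : nat) (a : nat -> R).
Hypothesis a_gt0 : forall i, (i < c)%N -> 0 < a i.

Lemma secular_ge0 mu : 0 < mu -> 0 <= secular c a mu.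
Proof.
move=> mu_gt0; apply: sumr_ge0 => i _; have := a_gt0 (ltn_ord i).
by move=> ai; rewrite divr_ge0 //; lra.
Qed.

Lemma secular_gt0 mu : (0 < c)%N -> 0 < mu -> 0 < secular c a mu.
Proof.
move=> c_gt0 mu_gt0; rewrite /secular (bigD1 (Ordinal c_gt0)) //=.
have := a_gt0 c_gt0 => a0; rewrite ltr_wpDr ?divr_gt0 //; last by lra.
apply: sumr_ge0 => i _; have := a_gt0 (ltn_ord i).
by move=> ai; rewrite divr_ge0 //; lra.
Qed.

Lemma secular_antitone s : 0 <= s -> antitone_above s (secular c a).
Proof.
move=> s_ge0 x y sx xy; apply: ler_sum => i _; have := a_gt0 (ltn_ord i) => ai.
rewrite /frac_shift ler_pdivrMr; last by lra.
by rewrite mulrAC ler_pdivlMr ?ler_pM2l //; lra.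
Qed.

Lemma secular_le_sum mu : 0 < mu -> secular c a mu <= (\sum_(i < c) a i) / mu.
Proof.
move=> mu_gt0; rewrite /secular mulr_suml; apply: ler_sum => i _.
have := a_gt0 (ltn_ord i) => ai.
by rewrite ler_wpM2l ?lef_pV2 ?posrE //; lra.
Qed.

End Secular.
End SecularEquation.

Section SecularRoot.
Variables (R : rcfType) (c : nat) (a : nat -> R) (s : R).
Hypothesis a_gt0 : forall i, (i < c)%N -> 0 < a i.

(* The secular equation with its denominators cleared, so that [poly_ivt] applies. *)
Definition secular_poly : {poly R} :=
  ('X - s%:P) * \prod_(i < c) ('X + (a i)%:P) -
  (2%:P * 'X - s%:P) * \sum_(i < c) ((a i)%:P * \prod_(j < c | j != i) ('X + (a j)%:P)).

Lemma prod_shift_gt0 x : 0 < x -> 0 < \prod_(i < c) (x + a i).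
Proof. by move=> x_gt0; apply: prodr_gt0 => i _; have := a_gt0 (ltn_ord i); lra. Qed.

Lemma secular_polyE x : 0 < x ->
  secular_poly.[x] = \prod_(i < c) (x + a i) * (x - s - (2 * x - s) * secular c a x).
Proof.
move=> x_gt0; rewrite /secular_poly !hornerE horner_prod horner_sum.
have -> : \prod_(i < c) ('X + (a i)%:P).[x] = \prod_(i < c) (x + a i).
  by apply: eq_bigr => i _; rewrite !hornerE.
have -> : \sum_(i < c) ((a i)%:P * \prod_(j < c | j != i) ('X + (a j)%:P)).[x] =
          \prod_(i < c) (x + a i) * secular c a x.
  rewrite /secular mulr_sumr; apply: eq_bigr => i _.
  rewrite hornerM horner_prod hornerC [in RHS](bigD1 i) //=.
  rewrite (eq_bigr (fun j : 'I_c => x + a j)) => [|j _]; last by rewrite !hornerE.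
  have := a_gt0 (ltn_ord i) => ai; rewrite /frac_shift.
  by field; rewrite gt_eqF //; lra.
ring.
Qed.

Lemma secular_sol_exists : (0 < c)%N -> 0 < s -> exists m, secular_sol s (secular c a) m.
Proof.
move=> c_gt0 s_gt0.
set N := \sum_(i < c) a i; set M := s + 2 * N + 1.
have N_ge0 : 0 <= N by apply: sumr_ge0 => i _; apply/ltW/a_gt0.
have M_gt0 : 0 < M by rewrite /M; lra.
have Ps_lt0 : secular_poly.[s] < 0.
  rewrite secular_polyE // pmulr_rlt0 ?prod_shift_gt0 //.
  by have := secular_gt0 a_gt0 c_gt0 s_gt0; nra.
have PM_ge0 : 0 <= secular_poly.[M].
  rewrite secular_polyE //; apply: mulr_ge0; first exact/ltW/prod_shift_gt0.
  have := secular_ge0 a_gt0 M_gt0.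
  have : M * secular c a M <= N by rewrite mulrC -ler_pdivlMr ?secular_le_sum.
  by rewrite /M; nra.
have sM : s <= M by rewrite /M; lra.
have P_sign : secular_poly.[s] <= 0 <= secular_poly.[M] by rewrite PM_ge0 ltW.
have [m /andP[sm _] root_m] := poly_ivt sM P_sign.
have {sm} sm : s < m by rewrite lt_neqAle sm andbT; apply: contraTneq root_m => <-; rewrite /root lt_eqF.
exists m; split => //; move: root_m; rewrite /root secular_polyE; last by lra.
rewrite mulf_eq0 gt_eqF ?prod_shift_gt0 //=; last by lra.
by rewrite subr_eq0 => /eqP.
Qed.

End SecularRoot.

Section Spectrum.
Variables (R : realFieldType) (s c : nat) (ns : nat -> nat).
Local Notation V := (jvert s c ns).
Local Notation a := (fun i => (ns i)%:R : R).
Implicit Types (f : V -> R) (l : R).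

Definition core_sum f := \sum_(x | block x == None) f x.
Definition block_sum f i := \sum_(x | block x == Some i) f x.

Lemma sum_jvert f : \sum_x f x = core_sum f + \sum_i block_sum f i.
Proof.
rewrite /core_sum /block_sum (big_mkcond (fun x => block x == None)).
rewrite (eq_bigr (fun i => \sum_x (if block x == Some i then f x else 0))); last by move=> i _; rewrite big_mkcond.
rewrite exchange_big -big_split /=; apply: eq_bigr => x _.
case: (block x) => [j|] /=; last by rewrite big1 ?addr0.
rewrite add0r (bigD1 j) //= eqxx big1 ?addr0 // => i nij.
by rewrite (inj_eq (@Some_inj _)) eq_sym (negbTE nij).
Qed.

Lemma sum_jnear_core f y : block y = None -> \sum_(x | jnear y x) f x = \sum_x f x.
Proof. by move=> y_core; apply: eq_bigl => x; rewrite /jnear y_core. Qed.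

Lemma sum_jnear_block f y i :
  block y = Some i -> \sum_(x | jnear y x) f x = core_sum f + block_sum f i.
Proof.
move=> y_i; rewrite /core_sum /block_sum !(big_mkcond (fun x => block x == _)) -big_split.
rewrite big_mkcond; apply: eq_bigr => x _; rewrite /jnear y_i /=.
by case: (block x) => [j|] /=; rewrite ?add0r ?addr0 // [Some i == _]eq_sym; case: eqP.
Qed.

Lemma sum_jdist f y :
  \sum_x f x * (jdist x y)%:R = 2 * \sum_x f x - f y - \sum_(x | jnear y x) f x.
Proof.
have -> : f y = \sum_x (if x == y then f x else 0) by rewrite -big_mkcond big_pred1_eq.
apply/eqP; rewrite eq_sym !subr_eq (big_mkcond (jnear y)) -!big_split mulr_sumr /=.
apply/eqP/eq_bigr => x _.
rewrite /jdist; case: eqP => [->|_]; first by rewrite jnearxx; ring.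
by rewrite jnearC; case: jnear; ring.
Qed.

Lemma core_sum_const k : core_sum (fun=> k) = s%:R * k.
Proof.
rewrite /core_sum (eq_bigl [pred x : V | block x == None]) //.
by rewrite sumr_const card_block_None mulr_natl.
Qed.

Lemma block_sum_const i k : block_sum (fun=> k) i = (ns i)%:R * k.
Proof.
rewrite /block_sum (eq_bigl [pred x : V | block x == Some i]) //.
by rewrite sumr_const card_block_Some mulr_natl.
Qed.

Hypothesis ns_gt0 : forall i, (i < c)%N -> (0 < ns i)%N.

Lemma ns_gt0R i : (i < c)%N -> 0 < (ns i)%:R :> R.
Proof. by move/ns_gt0; rewrite ltr0n. Qed.

Definition dist_eigenfun f l := forall y, \sum_x f x * (jdist x y)%:R = l * f y.

Section Eigenfunction.
Variables (f : V -> R) (l : R).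
Hypothesis f_eigen : dist_eigenfun f l.
Local Notation T := (\sum_x f x).

Lemma eigenfun_core y : block y = None -> (l + 1) * f y = T.
Proof. by move=> y_core; rewrite mulrDl -f_eigen sum_jdist sum_jnear_core //; ring. Qed.

Lemma eigenfun_block y i :
  block y = Some i -> (l + 1) * f y = 2 * T - core_sum f - block_sum f i.
Proof. by move=> y_i; rewrite mulrDl -f_eigen sum_jdist (sum_jnear_block _ y_i); ring. Qed.

Lemma eigenfun_core_sum : (l + 1) * core_sum f = s%:R * T.
Proof.
rewrite /core_sum mulr_sumr -core_sum_const.
by apply: eq_bigr => y /eqP; apply: eigenfun_core.
Qed.

Lemma eigenfun_block_sum i :
  (l + 1) * block_sum f i = (ns i)%:R * (2 * T - core_sum f - block_sum f i).
Proof.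
rewrite /block_sum mulr_sumr -block_sum_const.
by apply: eq_bigr => y /eqP; apply: eigenfun_block.
Qed.

Hypothesis l1_gt0 : 0 < l + 1.

Lemma eigenfun_block_sumE i :
  block_sum f i = (2 * T - core_sum f) * frac_shift (l + 1) (ns i)%:R.
Proof.
have nz : l + 1 + (ns i)%:R != 0 by rewrite gt_eqF // addr_gt0 ?ns_gt0R.
apply: (mulIf nz); rewrite /frac_shift mulrDr [_ * (l + 1)]mulrC eigenfun_block_sum.
by field; rewrite nz.
Qed.

(* If the total vanished, so would all block sums, and then [f] itself. *)
Lemma eigenfun_total_neq0 : (exists x, f x != 0) -> T != 0.
Proof.
move=> [x fx]; apply: contraNneq fx => T0.
have X0 : core_sum f = 0.
  by apply/eqP; have := eigenfun_core_sum; rewrite T0 mulr0 => /eqP; rewrite mulf_eq0 gt_eqF.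
have Y0 i : block_sum f i = 0 by rewrite eigenfun_block_sumE T0 X0; ring.
have : (l + 1) * f x = 0.
  case x_blk: (block x) => [i|]; last by rewrite (eigenfun_core x_blk) T0.
  by rewrite (eigenfun_block x_blk) T0 X0 Y0; ring.
by move/eqP; rewrite mulf_eq0 gt_eqF // => /eqP.
Qed.

Lemma eigenfun_secular_sol :
  (exists x, f x != 0) -> s%:R < l + 1 -> secular_sol s%:R (secular c a) (l + 1).
Proof.
move=> f_neq0 s_lt; split=> //; set mu := l + 1.
have T_neq0 := eigenfun_total_neq0 f_neq0.
have eT : T = core_sum f + (2 * T - core_sum f) * secular c a mu.
  by rewrite {1}sum_jvert /secular mulr_sumr; congr (_ + _); apply: eq_bigr => i _; rewrite eigenfun_block_sumE.
have e1 : T - core_sum f - (2 * T - core_sum f) * secular c a mu = 0 by rewrite {1}eT; ring.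
apply: (mulIf T_neq0); apply/eqP; rewrite -subr_eq0; apply/eqP.
transitivity (mu * (T - core_sum f - (2 * T - core_sum f) * secular c a mu) +
              (mu * core_sum f - s%:R * T) * (1 - secular c a mu)); first ring.
by rewrite e1 eigenfun_core_sum subrr; ring.
Qed.

End Eigenfunction.

Hypothesis s_gt0 : (0 < s)%N.

Lemma DjoinE i j : Djoin R s c ns i j = (jdist (enum_val i) (enum_val j))%:R.
Proof. by rewrite mxE gdist_jadj. Qed.

Lemma eigenvalue_DjoinP l :
  eigenvalue (Djoin R s c ns) l <-> exists2 f, (exists x, f x != 0) & dist_eigenfun f l.
Proof.
have sum_enum (F : V -> R) : \sum_(i < #|V|) F (enum_val i) = \sum_x F x.
  by rewrite -big_enum_val.
split=> [/eigenvalueP [v vE v_neq0]|[f [x fx] f_eigen]].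
  exists (fun x => v 0 (enum_rank x)).
    have [j vj] : exists j, v 0 j != 0.
      apply/existsP; apply: contraNT v_neq0 => /existsPn v0.
      by apply/eqP/rowP => j; rewrite mxE; apply/eqP; rewrite -[_ == _]negbK v0.
    by exists (enum_val j); rewrite enum_valK.
  move=> y; move/rowP/(_ (enum_rank y)): vE; rewrite !mxE => <-.
  by rewrite -sum_enum; apply: eq_bigr => i _; rewrite DjoinE enum_valK enum_rankK.
apply/eigenvalueP; exists (\row_j f (enum_val j)).
  apply/rowP => j; rewrite !mxE -f_eigen -sum_enum.
  by apply: eq_bigr => i _; rewrite mxE DjoinE.
apply/eqP => /rowP /(_ (enum_rank x)); rewrite !mxE enum_rankK => fx0.
by rewrite fx0 eqxx in fx.
Qed.

Variable m : R.
Hypothesis m_sol : secular_sol s%:R (secular c a) m.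

Lemma eigenvalue_Djoin_sol : eigenvalue (Djoin R s c ns) (m - 1).
Proof.
have [sm m_eq] := m_sol.
have s_gt0R : 0 < s%:R :> R by rewrite ltr0n.
have m_gt0 : 0 < m by lra.
have m_neq0 : m != 0 by rewrite gt_eqF.
(* The solution of the block-sum equations with total [1]. *)
pose f (x : V) := if block x is Some i then (2 - s%:R / m) / (m + (ns i)%:R) else m^-1.
apply/eigenvalue_DjoinP; exists f.
  by exists (inl (Ordinal s_gt0)); rewrite /f invr_eq0.
have X : core_sum f = s%:R / m.
  by rewrite -core_sum_const; apply: eq_bigr => x /eqP; rewrite /f => ->.
have Y i : block_sum f i = (2 - s%:R / m) * frac_shift m (ns i)%:R.
  rewrite /frac_shift mulrA mulrAC mulrC -block_sum_const.
  by apply: eq_bigr => x /eqP; rewrite /f => ->.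
have T : \sum_x f x = 1.
  rewrite sum_jvert X (eq_bigr _ (fun i _ => Y i)) -mulr_sumr -/(secular c a m).
  apply: (mulIf m_neq0); rewrite mul1r.
  have -> : (s%:R / m + (2 - s%:R / m) * secular c a m) * m =
            s%:R + (2 * m - s%:R) * secular c a m by field.
  by rewrite -m_eq; ring.
move=> y; rewrite sum_jdist T; case y_blk: (block y) => [i|].
  have n_neq0 : m + (ns i)%:R != 0 by rewrite gt_eqF // ltr_wpDr.
  rewrite (sum_jnear_block _ y_blk) X Y /f y_blk /frac_shift.
  by field; rewrite n_neq0 m_neq0.
by rewrite (sum_jnear_core _ y_blk) T /f y_blk; field.
Qed.

Lemma eigenvalue_Djoin_le l : eigenvalue (Djoin R s c ns) l -> l <= m - 1.
Proof.
move=> /eigenvalue_DjoinP [f f_neq0 f_eigen].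
have [sm _] := m_sol.
have [l1_le|s_lt] := lerP (l + 1) s%:R; first lra.
have s_gt0R : 0 < s%:R :> R by rewrite ltr0n.
have l1_gt0 : 0 < l + 1 by lra.
have anti := secular_antitone ns_gt0R (ltW s_gt0R).
by rewrite (secular_sol_unique s_gt0R m_sol (eigenfun_secular_sol f_eigen l1_gt0 f_neq0 s_lt) anti); lra.
Qed.

End Spectrum.

Section LargestEigenvalue.
Variables (R : realType) (s c : nat).
Hypothesis s_gt0 : (0 < s)%N.
Local Notation secular_of ns := (secular c (fun i => (ns i)%:R : R)).

Lemma lambda1_Djoin ns m : (forall i, (i < c)%N -> (0 < ns i)%N) ->
  secular_sol s%:R (secular_of ns) m -> lambda1 (Djoin R s c ns) = m - 1.
Proof.
move=> ns_gt0 m_sol.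
have m_max := eigenvalue_Djoin_le ns_gt0 s_gt0 m_sol.
have m_eig := eigenvalue_Djoin_sol s_gt0 m_sol.
apply: xget_unique => [|l [l_eig l_max]]; first by split.
by apply/le_anti; rewrite m_max ?l_max.
Qed.

Hypothesis c_gt0 : (0 < c)%N.
Variables ns1 ns2 : nat -> nat.
Hypotheses (ns1_gt0 : forall i, (i < c)%N -> (0 < ns1 i)%N)
           (ns2_gt0 : forall i, (i < c)%N -> (0 < ns2 i)%N).

Lemma lambda1_Djoin_le :
  (forall mu, s%:R < mu -> secular_of ns2 mu <= secular_of ns1 mu) ->
  lambda1 (Djoin R s c ns2) <= lambda1 (Djoin R s c ns1).
Proof.
move=> le12; have s_gt0R : 0 < s%:R :> R by rewrite ltr0n.
have [m1 sol1] := secular_sol_exists (ns_gt0R R ns1_gt0) c_gt0 s_gt0R.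
have [m2 sol2] := secular_sol_exists (ns_gt0R R ns2_gt0) c_gt0 s_gt0R.
rewrite (lambda1_Djoin ns1_gt0 sol1) (lambda1_Djoin ns2_gt0 sol2) lerD2r.
apply: (secular_sol_le s_gt0R sol2 sol1 (secular_antitone (ns_gt0R R ns1_gt0) (ltW s_gt0R))).
by apply: le12; case: sol2.
Qed.

Lemma lambda1_Djoin_lt :
  (forall mu, s%:R < mu -> secular_of ns2 mu < secular_of ns1 mu) ->
  lambda1 (Djoin R s c ns2) < lambda1 (Djoin R s c ns1).
Proof.
move=> lt12; have s_gt0R : 0 < s%:R :> R by rewrite ltr0n.
have [m1 sol1] := secular_sol_exists (ns_gt0R R ns1_gt0) c_gt0 s_gt0R.
have [m2 sol2] := secular_sol_exists (ns_gt0R R ns2_gt0) c_gt0 s_gt0R.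
rewrite (lambda1_Djoin ns1_gt0 sol1) (lambda1_Djoin ns2_gt0 sol2) ltrD2r.
apply: (secular_sol_lt s_gt0R sol2 sol1 (secular_antitone (ns_gt0R R ns1_gt0) (ltW s_gt0R))).
by apply: lt12; case: sol2.
Qed.

End LargestEigenvalue.

Lemma nonincr_last_leq (f : nat -> nat) c :
  (forall i, (i.+1 < c)%N -> (f i.+1 <= f i)%N) ->
  forall i, (i < c)%N -> (f c.-1 <= f i)%N.
Proof.
move=> f_step i ic.
have c_gt0 : (0 < c)%N by apply: leq_ltn_trans ic.
apply: (@homo_leq_in _ [pred i | (i < c)%N] f (fun x y => y <= x)%N) => //=.
- by move=> y x z xy yz; apply: leq_trans yz xy.
- by move=> x y xc yc k /andP[_ ky]; apply: ltn_trans ky yc.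
- by move=> x _; apply: f_step.
- by rewrite inE prednK.
- by rewrite -ltnS prednK.
Qed.

Unset Implicit Arguments.

Theorem lemma3p1 (R : realType) (n c s p : nat) (ns : nat -> nat) :
  (0 < n)%N -> (0 < c)%N -> (0 < s)%N -> (0 < p)%N ->
  (forall i, (i < c)%N -> (0 < ns i)%N) ->
  (2 * p <= ns 0)%N ->
  (forall i, (i.+1 < c)%N -> (ns i.+1 <= ns i)%N) ->
  (p <= ns c.-1)%N ->
  (\sum_(i < c) ns i)%N = (n - s)%N ->
  let ns' := fun i : nat => if i == 0%N then (n - s - p * (c - 1))%N else p in
  (lambda1 (Djoin R s c ns') <= lambda1 (Djoin R s c ns))%R /\
  (lambda1 (Djoin R s c ns) = lambda1 (Djoin R s c ns') <->
     (forall i, (i < c)%N -> ns i = ns' i)).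
Proof.
move=> _ c_gt0 s_gt0 p_gt0 ns_gt0 ns0_ge ns_step ns_last sum_ns ns'.
have [c' c_eq] : exists c', c = c'.+1 by exists c.-1; rewrite prednK.
subst c; have ns_ge i : (i <= c')%N -> (p <= ns i)%N.
  by move=> ic; apply: leq_trans ns_last (nonincr_last_leq ns_step ic).
have -> : ns' = extremal_blocks c' p ns.
  by apply/funext => i; rewrite /ns' /extremal_blocks sum_ns subn1.
have mu_gt0 (mu : R) : s%:R < mu -> 0 < mu by apply: lt_trans; rewrite ltr0n.
have ns'_gt0 i : (i < c'.+1)%N -> (0 < extremal_blocks c' p ns i)%N.
  by move=> _; apply: extremal_blocks_gt0.
have extremal_le := lambda1_Djoin_le s_gt0 (ltn0Sn c') ns_gt0 ns'_gt0.
split; first by apply: extremal_le => mu /mu_gt0; apply: secular_extremal_blocks_le.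
split=> [eq_l|eq_ns].
  apply: extremal_blocksE => // j j_range; rewrite leqNgt; apply/negP => p_lt.
  have : lambda1 (Djoin R s c'.+1 (extremal_blocks c' p ns)) < lambda1 (Djoin R s c'.+1 ns).
    apply: lambda1_Djoin_lt => // mu /mu_gt0 mu_pos.
    by apply: secular_extremal_blocks_lt => //; [lia | exists j].
  by rewrite eq_l ltxx.
have eq_sec mu : secular c'.+1 (fun i => (ns i)%:R : R) mu =
                 secular c'.+1 (fun i => (extremal_blocks c' p ns i)%:R) mu.
  by apply: eq_bigr => i _; rewrite eq_ns.
by apply/le_anti; rewrite extremal_le ?lambda1_Djoin_le // => mu _; rewrite eq_sec.
Qed.
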